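(* Let $A\in\mathbb{R}^{n\times n}$ and $C\in\mathbb{R}^{p\times n}$ with $C\neq 0$ and $\operatorname{rank} C = p$. Then there exist real matrices $L\in\mathbb{R}^{n\times p}$ and $F\in\mathbb{R}^{n\times p}$ such that the $(n+p)\times(n+p)$ real matrix $$\begin{bmatrix} A - LC & F \\ -C & I_p \end{bmatrix}$$ is Schur stable if and only if the pair $(A,C)$ is detectable.
   Context: A real square matrix is Schur stable if all of its eigenvalues $\lambda\in\mathbb{C}$ satisfy $|\lambda|<1$. The pair $(A,C)$ is detectable if there exists $K\in\mathbb{R}^{n\times p}$ such that $A+KC$ is Schur stable (equivalently, $\operatorname{rank}\begin{bmatrix} C \\ zI_n - A\end{bmatrix} = n$ for every $z\in\mathbb{C}$ with $|z|\ge 1$). Motivation: for the discrete-time system $x(k+1)=Ax(k)+Bu(k)$, $y(k)=Cx(k)$, the system $\hat x(k+1)=(A-LC)\hat x(k)+Ly(k)+Bu(k)+Fv(k)$, $v(k+1)=v(k)+y(k)-C\hat x(k)$ is called a full-order proportional-integral observer exactly when the displayed matrix is Schur stable. *)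

From HB Require Import structures.
From mathcomp Require Import all_boot all_order all_algebra.
From mathcomp Require Import complex.
From mathcomp Require Import reals.
Set Implicit Arguments. Unset Strict Implicit. Unset Printing Implicit Defensive.
Import Order.TTheory GRing.Theory Num.Theory.
Local Open Scope ring_scope.
Local Open Scope complex_scope.

Definition schur_stable (R : realType) (n : nat) (M : 'M[R]_n) : Prop :=
  forall z : R[i], eigenvalue (map_mx (fun x : R => x%:C) M) z -> `|z| < 1.

Definition detectable (R : realType) (n p : nat)
    (A : 'M[R]_n) (C : 'M[R]_(p, n)) : Prop :=
  exists K : 'M[R]_(n, p), schur_stable (A + K *m C).

Definition pi_obs_mx (R : realType) (n p : nat)
    (A : 'M[R]_n) (C : 'M[R]_(p, n)) (L F : 'M[R]_(n, p)) : 'M[R]_(n + p) :=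
  block_mx (A - L *m C) F (- C) 1%:M.

From HB Require Import structures.
From mathcomp Require Import all_boot all_order all_algebra.
From mathcomp Require Import complex reals ring.
Import GRing.Theory Num.Theory.
Local Open Scope ring_scope.
Set Implicit Arguments. Unset Strict Implicit. Unset Printing Implicit Defensive.

(* If (A, C) is detectable with gain K and X is a right inverse of C, a block
   change of basis [[1, X]; [0, 1]] makes the observer matrix lower block
   triangular with diagonal blocks A + K C and 0.
   Conversely, an unstable left eigenvector of A^T killed by C^T, padded with
   zeros, is an unstable left eigenvector of the transposed observer matrix, so
   (A^T, C^T) passes the Hautus test. The Hautus test gives a stabilizing gain
   by induction on the dimension: once B is brought to the form [[1, 0]; [0, *]]
   the first state is actuated directly, and stabilizing the remaining states,
   with the coupling column of A as an extra input, suffices. *)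

Section Eigenvalue.
Variable K : fieldType.

Lemma eigenvalue_unitmx n (g : 'M[K]_n) a :
  eigenvalue g a = (g - a%:M \notin unitmx).
Proof. by rewrite /eigenvalue /eigenspace kermx_eq0 row_free_unit. Qed.

Lemma eigenvalue_trmx n (g : 'M[K]_n) a : eigenvalue g^T a = eigenvalue g a.
Proof. by rewrite !eigenvalue_unitmx -unitmx_tr linearB /= tr_scalar_mx trmxK. Qed.

Lemma eigenvalue_similar n (X Y P : 'M[K]_n) a :
  X *m P = P *m Y -> P \in unitmx -> eigenvalue X a -> eigenvalue Y a.
Proof.
move=> XP uP /eigenvalueP [v vX v0]; apply/eigenvalueP; exists (v *m P).
  by rewrite -mulmxA -XP mulmxA vX scalemxAl.
by rewrite mulmx_free_eq0 ?row_free_unit.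
Qed.

Lemma eigenvalue_lblock n1 n2 (X : 'M[K]_n1) (Y : 'M[K]_(n2, n1)) (W : 'M[K]_n2) a :
  eigenvalue (block_mx X 0 Y W) a = eigenvalue X a || eigenvalue W a.
Proof.
rewrite !eigenvalue_unitmx [a%:M]scalar_mx_block opp_block_mx add_block_mx oppr0 addr0.
by rewrite !unitmxE det_lblock unitrM negb_and.
Qed.

Lemma eigenvalue0 n a : eigenvalue (0 : 'M[K]_n) a -> a = 0.
Proof.
move=> /eigenvalueP [v]; rewrite mulmx0 => /esym /eqP.
by rewrite scaler_eq0 => /orP [/eqP ->|/eqP ->]; rewrite ?eqxx.
Qed.

End Eigenvalue.

Lemma mul_pid_mx_delta00 (K : pzRingType) n m r : (0 < r)%N ->
  (pid_mx r : 'M[K]_(1 + n, m.+1)) *m delta_mx 0 0 = col_mx 1%:M 0.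
Proof.
move=> r_gt0; rewrite -colE; apply/matrixP => i k; rewrite !ord1.
rewrite -(splitK i); case: (split i) => i' /=.
  by rewrite col_mxEu !mxE !ord1 /= r_gt0.
by rewrite col_mxEd !mxE.
Qed.

Section SchurStable.
Variable R : realType.
Local Notation cm M := (map_mx (real_complex R) M).

Lemma schur_stableE n (M : 'M[R]_n) :
  schur_stable M <-> forall z, eigenvalue (cm M) z -> `|z| < 1.
Proof. by []. Qed.

Lemma schur_stable_similar n (X Y P : 'M[R]_n) :
  X *m P = P *m Y -> P \in unitmx -> schur_stable Y -> schur_stable X.
Proof.
move=> XP uP /schur_stableE sY; apply/schur_stableE => z eXz; apply: sY.
apply: (@eigenvalue_similar _ _ _ _ (cm P)) eXz; first by rewrite -!map_mxM XP.
by rewrite map_unitmx.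
Qed.

Lemma schur_stable_trmx n (M : 'M[R]_n) : schur_stable M^T <-> schur_stable M.
Proof.
by split=> sM z; move: (sM z); rewrite -map_trmx eigenvalue_trmx.
Qed.

Lemma schur_stable_lblock n1 n2 (X : 'M[R]_n1) (Y : 'M[R]_(n2, n1)) (W : 'M[R]_n2) :
  schur_stable X -> schur_stable W -> schur_stable (block_mx X 0 Y W).
Proof.
move=> /schur_stableE sX /schur_stableE sW; apply/schur_stableE => z.
by rewrite map_block_mx map_mx0 eigenvalue_lblock => /orP [/sX|/sW].
Qed.

Lemma schur_stable0 n : schur_stable (0 : 'M[R]_n).
Proof.
apply/schur_stableE => z; rewrite map_mx0 => /eigenvalue0 ->.
by rewrite normr0 ltr01.
Qed.

End SchurStable.

(* With [C X = 1] and a stabilizing [K], the choice [L = X - K],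
   [F = X - (A + K C) X] makes the change of basis [[1, X]; [0, 1]] turn the
   observer matrix into [[A + K C, 0]; [-C, 0]]. *)
Lemma pi_obs_stable_of_detectable (R : realType) n p
    (A : 'M[R]_n) (C : 'M[R]_(p, n)) :
  \rank C = p -> detectable A C ->
  exists L F, schur_stable (pi_obs_mx A C L F).
Proof.
move=> rC [K sK].
have /row_freeP [X CX] : row_free C by rewrite /row_free rC.
exists (X - K), (X - (A + K *m C) *m X).
apply: (@schur_stable_similar _ _ _ (block_mx (A + K *m C) 0 (- C) 0)
                              (block_mx 1%:M X 0 1%:M)).
- rewrite /pi_obs_mx !mulmx_block !mulmx1 !mul1mx !mulmx0 !mul0mx !addr0 !add0r.
  rewrite mulNmx CX addNr; congr block_mx.
    by rewrite mulmxBl mulmxN opprB addrA.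
  rewrite !mulmxBl !mulmxDl -!mulmxA CX mulmx1.
  by apply/matrixP => i j; rewrite !mxE; ring.
- by rewrite unitmxE det_ublock !det1 mulr1 unitr1.
- by apply: schur_stable_lblock => //; apply: schur_stable0.
Qed.

Section Hautus.
Variable R : realType.
Local Notation cm M := (map_mx (real_complex R) M).

Definition hautus_stabilizable n m (A : 'M[R]_n) (B : 'M[R]_(n, m)) : Prop :=
  forall (z : R[i]) (v : 'rV[R[i]]_n), ~ `|z| < 1 ->
    v *m cm A = z *: v -> v *m cm B = 0 -> v = 0.

Definition stabilizable n m (A : 'M[R]_n) (B : 'M[R]_(n, m)) : Prop :=
  exists F : 'M[R]_(m, n), schur_stable (A + B *m F).

Lemma hautus_stabilizable0 n m (A : 'M[R]_n) :
  hautus_stabilizable A (0 : 'M_(n, m)) -> schur_stable A.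
Proof.
move=> hA z /eigenvalueP [v vA vn0]; case: (boolP (`|z| < 1)) => // /negP zge1.
by move: vn0; rewrite (hA z v zge1 vA) ?eqxx // map_mx0 mulmx0.
Qed.

Lemma hautus_basis_change n m (A : 'M[R]_n) (B : 'M[R]_(n, m)) T U :
  T \in unitmx -> U \in unitmx -> hautus_stabilizable A B ->
  hautus_stabilizable (T *m A *m invmx T) (T *m B *m U).
Proof.
move=> uT uU hA z v zge1 vA vB.
have fT : row_free (cm T) by rewrite row_free_unit map_unitmx.
have fU : row_free (cm U) by rewrite row_free_unit map_unitmx.
apply/eqP; rewrite -(mulmx_free_eq0 _ fT); apply/eqP; apply: hA zge1 _ _.
- have TA : T *m A *m invmx T *m T = T *m A by rewrite mulmxKV.
  by rewrite -mulmxA -map_mxM -TA map_mxM mulmxA vA scalemxAl.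
- apply/eqP; rewrite -(mulmx_free_eq0 _ fU) -!mulmxA -!map_mxM.
  by move: vB; rewrite !map_mxM !mulmxA => ->.
Qed.

Lemma stabilizable_basis_change n m (A : 'M[R]_n) (B : 'M[R]_(n, m)) T U :
  T \in unitmx -> U \in unitmx ->
  stabilizable (T *m A *m invmx T) (T *m B *m U) -> stabilizable A B.
Proof.
move=> uT uU [F sF]; exists (U *m F *m T).
apply: (@schur_stable_similar _ _ _ _ (invmx T)) sF; last by rewrite unitmx_inv.
by rewrite mulmxDl mulmxDr !mulmxA mulVmx // !mul1mx mulmxK.
Qed.

Section FirstStateActuated.
Variables (n m : nat) (A : 'M[R]_(1 + n)) (B : 'M[R]_(1 + n, m)) (j : 'I_m).
Hypothesis Bj : B *m delta_mx j 0 = col_mx 1%:M 0.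

Local Notation Bred := (dsubmx B + dlsubmx A *m delta_mx 0 j).

Lemma Bred_delta : Bred *m delta_mx j 0 = dlsubmx A.
Proof.
have B2j : dsubmx B *m (delta_mx j 0 : 'M_(m, 1)) = 0.
  by rewrite mul_dsub_mx Bj col_mxKd.
rewrite mulmxDl B2j add0r -mulmxA mul_delta_mx.
by rewrite [delta_mx _ _]mx11_scalar mxE !eqxx mulmx1.
Qed.

Lemma hautus_reduce :
  hautus_stabilizable A B -> hautus_stabilizable (drsubmx A) Bred.
Proof.
move=> hA z v zge1 vA vB.
have va : v *m cm (dlsubmx A) = 0 by rewrite -Bred_delta map_mxM mulmxA vB mul0mx.
have vb : v *m cm (dsubmx B) = 0.
  by move: vB; rewrite map_mxD map_mxM mulmxDr mulmxA va mul0mx addr0.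
have := hA z (row_mx 0 v) zge1.
rewrite -[A]submxK map_block_mx mul_row_block !mul0mx !add0r va vA.
rewrite -[B]vsubmxK map_col_mx mul_row_col mul0mx add0r vb.
rewrite scale_row_mx scaler0 => /(_ erefl erefl) /eqP.
by rewrite -row_mx0 => /eqP /eq_row_mx [_ ->].
Qed.

(* Input [j] drives the first state alone, so feedback through it can set the
   first row of the closed loop at will. *)
Lemma closed_loop_first_row (F : 'M[R]_(m, 1 + n)) (Z : 'M[R]_(1 + n)) :
  dsubmx Z = dsubmx (A + B *m F) -> exists F', A + B *m F' = Z.
Proof.
move=> dZ; exists (F + delta_mx j 0 *m (usubmx Z - usubmx (A + B *m F))).
rewrite mulmxDr addrA mulmxA Bj mul_col_mx mul1mx mul0mx.
by rewrite -{1}(vsubmxK (A + _)) add_col_mx addr0 -dZ addrC subrK vsubmxK.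
Qed.

(* The closed loop is taken to be [P Y P^-1], where [Y] is lower block
   triangular with diagonal blocks [0] and the reduced closed loop. *)
Lemma stabilizable_reduce : stabilizable (drsubmx A) Bred -> stabilizable A B.
Proof.
move=> [G sG].
pose g : 'rV[R]_n := delta_mx 0 j *m G.
pose Y := block_mx (0 : 'M[R]_1) 0 (dlsubmx A) (drsubmx A + Bred *m G).
pose P := block_mx (1%:M : 'M[R]_1) g 0 1%:M.
pose Q := block_mx (1%:M : 'M[R]_1) (- g) 0 1%:M.
have QP : Q *m P = 1%:M.
  rewrite mulmx_block !(mulmx1, mul1mx, mulmx0, mul0mx, addr0, add0r) addrN.
  by rewrite scalar_mx_block.
have dZ : dsubmx (P *m Y *m Q) = dsubmx (A + B *m row_mx 0 G).
  rewrite !mulmx_block !(mulmx1, mul1mx, mulmx0, mul0mx, addr0, add0r).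
  rewrite block_mxEv col_mxKd linearD /= -mul_dsub_mx mul_mx_row mulmx0.
  rewrite -[dsubmx A]hsubmxK add_row_mx addr0; congr row_mx.
  rewrite mulmxN mulmxDl -mulmxA -/g.
  by rewrite addrCA (addrC (dsubmx B *m G)) addKr.
have [F closedF] := closed_loop_first_row dZ; exists F; rewrite closedF.
apply: (@schur_stable_similar _ _ _ Y P).
- by rewrite -!mulmxA QP mulmx1.
- by rewrite unitmxE det_ublock !det1 mulr1 unitr1.
- by apply: schur_stable_lblock sG; apply: schur_stable0.
Qed.

End FirstStateActuated.

Lemma stabilizable_of_hautus n m (A : 'M[R]_n) (B : 'M[R]_(n, m)) :
  hautus_stabilizable A B -> stabilizable A B.
Proof.
elim: n m A B => [|n IH] m A B hAB; have [B0|Bn0] := eqVneq B 0;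
  try by rewrite B0 in hAB; exists 0; rewrite mulmx0 addr0;
         exact: hautus_stabilizable0 hAB.
  by rewrite flatmx0 eqxx in Bn0.
case: m B hAB Bn0 => [|m] B hAB Bn0; first by rewrite thinmx0 eqxx in Bn0.
pose T := invmx (col_ebase B); pose U := invmx (row_ebase B).
have uT : T \in unitmx by rewrite unitmx_inv col_ebase_unit.
have uU : U \in unitmx by rewrite unitmx_inv row_ebase_unit.
have TBU : T *m B *m U = pid_mx (\rank B).
  rewrite -{1}(mulmx_ebase B) !mulmxA mulVmx ?col_ebase_unit // mul1mx.
  by rewrite mulmxK ?row_ebase_unit.
apply: (stabilizable_basis_change uT uU).
have TBUj : T *m B *m U *m delta_mx 0 0 = col_mx 1%:M 0 :> 'M[R]_(1 + n, 1).
  by rewrite TBU; apply: mul_pid_mx_delta00; rewrite lt0n mxrank_eq0.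
apply: (stabilizable_reduce TBUj); apply: IH.
by apply: (hautus_reduce TBUj); apply: hautus_basis_change.
Qed.

End Hautus.

Lemma detectable_of_stabilizable_trmx (R : realType) n p
    (A : 'M[R]_n) (C : 'M[R]_(p, n)) :
  stabilizable A^T C^T -> detectable A C.
Proof.
move=> [F sF]; exists F^T; apply: (iffLR (schur_stable_trmx (A + F^T *m C))).
by rewrite linearD /= trmx_mul trmxK.
Qed.

(* A left eigenvector [v] of [A^T] with [v C^T = 0] extends by zero to a left
   eigenvector of the transposed observer matrix, for the same eigenvalue. *)
Lemma hautus_trmx_of_pi_obs_stable (R : realType) n p
    (A : 'M[R]_n) (C : 'M[R]_(p, n)) (L F : 'M[R]_(n, p)) :
  schur_stable (pi_obs_mx A C L F) -> hautus_stabilizable A^T C^T.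
Proof.
move=> /(iffRL (schur_stable_trmx _)) /schur_stableE sM z v zge1 vA vC.
have [//|vn0] := eqVneq v 0; case: zge1; apply: sM; apply/eigenvalueP.
exists (row_mx v (0 : 'rV_p)).
  rewrite tr_block_mx map_block_mx mul_row_block !mul0mx !addr0 linearB /=.
  rewrite linearN /= trmx_mul map_mxB map_mxN map_mxM mulmxBr mulmxA mulmxN.
  by rewrite vA vC mul0mx subr0 oppr0 scale_row_mx scaler0.
by apply: contra vn0 => /eqP; rewrite -row_mx0 => /eq_row_mx [-> _].
Qed.

Theorem theorem1 (R : realType) (n p : nat)
    (A : 'M[R]_n) (C : 'M[R]_(p, n)) :
  C != 0 -> \rank C = p ->
  (exists L F : 'M[R]_(n, p), schur_stable (pi_obs_mx A C L F)) <->
  detectable A C.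
Proof.
move=> _ rankC; split; last exact: (pi_obs_stable_of_detectable rankC).
move=> [L [F /hautus_trmx_of_pi_obs_stable /stabilizable_of_hautus]].
exact: detectable_of_stabilizable_trmx.
Qed.
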